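(* The Petersen graph $P$ does not admit an $S_{16}$-coloring.
   Context: For a graph $X$ and vertex $x$, $\partial_X(x)$ denotes the set of edges of $X$ incident to $x$. For cubic graphs $G, H$, an $H$-coloring of $G$ is a map $f: E(G)\to E(H)$ such that for every vertex $x$ of $G$ there is a vertex $y$ of $H$ with $f(\partial_G(x))=\partial_H(y)$. $S_{16}$ is the simple cubic graph on $16$ vertices with a central vertex $c$ and, for each $i\in\{1,2,3\}$, vertices $v_1^i,\dots,v_5^i$ with edges $v_1^iv_2^i, v_1^iv_3^i, v_1^iv_4^i, v_2^iv_3^i, v_2^iv_4^i, v_3^iv_5^i, v_4^iv_5^i$ and $v_5^ic$. *)

From mathcomp Require Import all_boot.
Unset Printing Implicit Defensive.

Definition edge_set (V : finType) (adj : rel V) : {set {set V}} :=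
  [set [set x; y] | x in V, y in V & adj x y].

Definition edge_type (V : finType) (adj : rel V) : finType :=
  {e : {set V} | e \in edge_set V adj}.

Definition incident (V : finType) (adj : rel V) (x : V) : {set edge_type V adj} :=
  [set e : edge_type V adj | x \in val e].

Definition H_coloring (VG VH : finType) (adjG : rel VG) (adjH : rel VH)
  (f : edge_type VG adjG -> edge_type VH adjH) : Prop :=
  forall x : VG, exists y : VH, f @: incident VG adjG x = incident VH adjH y.

Definition admits_coloring (VG VH : finType) (adjG : rel VG) (adjH : rel VH) :=
  exists f : edge_type VG adjG -> edge_type VH adjH, H_coloring VG VH adjG adjH f.

Definition adj_of_list (n : nat) (l : seq (nat * nat)) : rel 'I_n :=
  fun x y => ((nat_of_ord x, nat_of_ord y) \in l) || ((nat_of_ord y, nat_of_ord x) \in l).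

(* Petersen graph: outer 5-cycle 0..4, spokes i -- i+5, inner pentagram on 5..9. *)
Definition petersen_edges : seq (nat * nat) :=
  [:: (0,1); (1,2); (2,3); (3,4); (4,0);
      (0,5); (1,6); (2,7); (3,8); (4,9);
      (5,7); (7,9); (9,6); (6,8); (8,5)].
Definition petersen : rel 'I_10 := adj_of_list 10 petersen_edges.

(* S_16: c = 0 and v_k^i = 5*(i-1) + k  (i in {1,2,3}, k in {1..5}). *)
Definition S16_block (i : nat) : seq (nat * nat) :=
  let v k := 5 * i + k in
  [:: (v 1, v 2); (v 1, v 3); (v 1, v 4); (v 2, v 3); (v 2, v 4);
      (v 3, v 5); (v 4, v 5); (v 5, 0)].
Definition S16_edges : seq (nat * nat) := S16_block 0 ++ S16_block 1 ++ S16_block 2.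
Definition S16 : rel 'I_16 := adj_of_list 16 S16_edges.

(* An S16-coloring f of the Petersen graph P assigns to each edge of P an edge
   of S16. Both graphs are simple and cubic, so f maps the three edges at a
   vertex x of P bijectively onto the three edges at some vertex y of S16: the
   images of every star of P are three distinct edges with a common endpoint.
   A backtracking search over the edges of P, which prunes a partial assignment
   as soon as it breaks this at an endpoint of the edge just assigned, shows
   that no such assignment exists. *)
From mathcomp Require Import all_boot.

Set Implicit Arguments.
Unset Strict Implicit.
Unset Printing Implicit Defensive.

Definition touches (x : nat) (p : nat * nat) := (x == p.1) || (x == p.2).

Definition concurrent (L : seq (nat * nat)) :=
  if L is q :: L' then has (fun y => all (touches y) L') [:: q.1; q.2] else true.

Lemma concurrentP L : reflect (exists y, all (touches y) L) (concurrent L).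
Proof.
case: L => [|q L]; first by apply: ReflectT; exists 0.
apply: (iffP hasP) => [[y yq yL] | [y /andP[yq yL]]].
  by exists y; rewrite /= yL andbT; move: yq; rewrite !inE.
by exists y; rewrite // !inE.
Qed.

Section Backtracking.

Variables (T : eqType) (cands : seq T -> seq T) (P : seq T -> Prop).
Hypothesis cands_complete : forall s v t, P (s ++ v :: t) -> v \in cands s.

Fixpoint refuted k s :=
  if k is k'.+1 then all (fun v => refuted k' (rcons s v)) (cands s) else false.

Lemma refutedP k s t : refuted k s -> size t = k -> ~ P (s ++ t).
Proof.
elim: t k s => [|v t IH] [|k] s //= refs [size_t] Pst.
apply: (IH k (rcons s v)); rewrite ?cat_rcons //.
by move/allP: refs; apply; exact: cands_complete Pst.
Qed.

End Backtracking.

(* The entries of [s] are assigned to the first [size s] pairs of [lG];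
   [zip] drops the pairs that are not assigned yet. *)
Definition star_image (lG s : seq (nat * nat)) x :=
  [seq q.2 | q <- zip lG s & touches x q.1].

Definition star_preserving (lG lH s : seq (nat * nat)) :=
  [/\ size s = size lG, {subset s <= lH} &
      forall x, uniq (star_image lG s x) && concurrent (star_image lG s x)].

Definition extends_star L q := (q \notin L) && concurrent (rcons L q).

Definition star_cands (lG lH s : seq (nat * nat)) :=
  let p := nth (0, 0) lG (size s) in
  [seq q <- lH | extends_star (star_image lG s p.1) q &&
                 extends_star (star_image lG s p.2) q].

Lemma zip_take_size (S T : Type) (l : seq S) (s : seq T) :
  zip l s = zip (take (size s) l) s.
Proof. by elim: s l => [|a s IH] [|b l] //=; rewrite IH. Qed.

Lemma star_image_cat lG1 lG2 s t x : size lG1 = size s ->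
  star_image (lG1 ++ lG2) (s ++ t) x = star_image lG1 s x ++ star_image lG2 t x.
Proof. by move=> eq_size; rewrite /star_image zip_cat // filter_cat map_cat. Qed.

Lemma star_image_map (l : seq (nat * nat)) g x :
  star_image l (map g l) x = [seq g p | p <- l & touches x p].
Proof.
by elim: l => //= p l IH; rewrite /star_image /=; case: ifP => _; rewrite /= -IH.
Qed.

Lemma extends_star_prefix L v L' :
  uniq (L ++ v :: L') -> concurrent (L ++ v :: L') -> extends_star L v.
Proof.
rewrite /extends_star cat_uniq /= => /and3P[_ /norP[vL _] _] /concurrentP[y].
rewrite all_cat /= => /and3P[yL yv _].
by rewrite vL; apply/concurrentP; exists y; rewrite all_rcons yv yL.
Qed.

Lemma star_cands_complete lG lH s v t :
  star_preserving lG lH (s ++ v :: t) -> v \in star_cands lG lH s.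
Proof.
case=> [size_st sub_lH stars].
have lt_s : size s < size lG by rewrite -size_st size_cat addnS ltnS leq_addr.
set p := nth (0, 0) lG (size s).
have def_lG : lG = take (size s) lG ++ p :: drop (size s).+1 lG.
  by rewrite -drop_nth // cat_take_drop.
have at_p x : touches x p -> extends_star (star_image lG s x) v.
  move=> xp; have /andP[] := stars x.
  have -> : star_image lG (s ++ v :: t) x =
            star_image lG s x ++ v :: star_image (drop (size s).+1 lG) t x.
    rewrite {1}def_lG star_image_cat ?size_takel ?(ltnW lt_s) //.
    by rewrite /star_image [zip lG s]zip_take_size /= xp.
  exact: extends_star_prefix.
rewrite /star_cands mem_filter -/p !at_p /touches ?eqxx ?orbT //.
by rewrite sub_lH // mem_cat mem_head orbT.
Qed.

Section ListGraph.

Variables (n : nat) (l : seq (nat * nat)).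
Hypothesis l_bounded : all (fun p => (p.1 < n) && (p.2 < n)) l.

Local Notation edge := (edge_type 'I_n (adj_of_list n l)).

Definition pair_set (p : nat * nat) : {set 'I_n} := [set x : 'I_n | touches x p].

Lemma pair_set_edge p : p \in l -> pair_set p \in edge_set 'I_n (adj_of_list n l).
Proof.
move=> pl; have /andP[p1 p2] := allP l_bounded p pl.
apply/imset2P; exists (Ordinal p1) (Ordinal p2);
  rewrite ?inE /adj_of_list -?surjective_pairing ?pl //.
by apply/setP => x; rewrite !inE -!val_eqE.
Qed.

Lemma edge_pair (e : edge) : exists2 p, p \in l & val e = pair_set p.
Proof.
have /imset2P[x y _] := valP e; rewrite inE /adj_of_list => /orP[xy | yx] ->.
  by exists (val x, val y) => //; apply/setP => z; rewrite !inE -!val_eqE.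
by exists (val y, val x) => //; apply/setP => z; rewrite !inE -!val_eqE orbC.
Qed.

Definition pair_of (e : edge) : nat * nat :=
  nth (0, 0) l (find (fun p => pair_set p == val e) l).

Lemma pair_of_has (e : edge) : has (fun p => pair_set p == val e) l.
Proof. by have [p pl ep] := edge_pair e; apply/hasP; exists p; rewrite // ep. Qed.

Lemma pair_of_in e : pair_of e \in l.
Proof. by rewrite mem_nth // -has_find pair_of_has. Qed.

Lemma pair_ofK e : pair_set (pair_of e) = val e.
Proof. exact/eqP/(nth_find _ (pair_of_has e)). Qed.

Lemma pair_of_inj : injective pair_of.
Proof. by move=> e e' eq_e; apply: val_inj; rewrite -!pair_ofK eq_e. Qed.

Definition star_edges x : seq edge :=
  pmap insub [seq pair_set p | p <- l & touches x p].

Lemma mem_star_edges (x : 'I_n) e : (e \in star_edges x) = (e \in incident _ _ x).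
Proof.
rewrite mem_pmap_sub inE; apply/mapP/idP => [[p] | xe].
  by rewrite mem_filter => /andP[xp _] ->; rewrite inE.
exists (pair_of e); rewrite ?pair_ofK // mem_filter pair_of_in andbT.
by rewrite -pair_ofK inE in xe.
Qed.

Lemma size_star_edges x : size (star_edges x) = count (touches x) l.
Proof.
rewrite size_pmap_sub count_map -!size_filter; congr size.
by apply/all_filterP/allP => p; rewrite mem_filter => /andP[_]; exact: pair_set_edge.
Qed.

Definition incidence p := [seq touches x p | x <- iota 0 n].

Lemma uniq_pair_set :
  uniq [seq incidence p | p <- l] -> uniq [seq pair_set p | p <- l].
Proof.
move=> uniq_inc.
apply: (@map_uniq _ _ (fun S : {set 'I_n} => [seq x \in S | x <- enum 'I_n])).
rewrite -map_comp (@eq_map _ _ _ incidence) // => p /=.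
by rewrite /incidence -val_enum_ord -map_comp; apply: eq_map => x; rewrite /= inE.
Qed.

Lemma uniq_star_edges x : uniq [seq incidence p | p <- l] -> uniq (star_edges x).
Proof.
move/uniq_pair_set=> uniq_l; apply: pmap_sub_uniq; apply: subseq_uniq uniq_l.
exact/map_subseq/filter_subseq.
Qed.

End ListGraph.

Arguments pair_of {n l} e.

Section InducedAssignment.

Variables (nG nH d : nat) (lG lH : seq (nat * nat)).
Hypothesis lG_bounded : all (fun p => (p.1 < nG) && (p.2 < nG)) lG.
Hypothesis lH_bounded : all (fun q => (q.1 < nH) && (q.2 < nH)) lH.
Hypothesis lH_simple : uniq [seq incidence nH q | q <- lH].
Hypothesis degG : all (fun x => count (touches x) lG <= d) (iota 0 nG).
Hypothesis degH : all (fun y => d <= count (touches y) lH) (iota 0 nH).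

Variable f : edge_type 'I_nG (adj_of_list nG lG) -> edge_type 'I_nH (adj_of_list nH lH).
Hypothesis f_coloring : H_coloring _ _ _ _ f.

Definition induced_pair p :=
  oapp (fun e => pair_of (f e)) (0, 0) (insub (pair_set nG p)).

Lemma induced_pair_in p : p \in lG -> induced_pair p \in lH.
Proof.
move=> pl; rewrite /induced_pair; case: insubP => [e _ _ | ]; first exact: pair_of_in.
by rewrite pair_set_edge.
Qed.

Lemma map_induced_pair F : all (mem lG) F ->
  map induced_pair F = map (pair_of \o f) (pmap insub [seq pair_set nG p | p <- F]).
Proof.
elim: F => //= p F IH /andP[pl /IH {}IH]; rewrite /induced_pair /= IH.
by case: insubP => [e _ _ // | ]; rewrite pair_set_edge.
Qed.

Lemma induced_star (x : 'I_nG) :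
  let L := [seq induced_pair p | p <- lG & touches x p] in uniq L && concurrent L.
Proof.
rewrite /= map_induced_pair; last by apply/allP => p; rewrite mem_filter => /andP[].
have [y fx_y] := f_coloring x.
have f_star e : e \in star_edges nG lG x -> f e \in incident _ _ y.
  by rewrite mem_star_edges // -fx_y => /imset_f->.
apply/andP; split.
  rewrite map_comp map_inj_uniq; last exact: pair_of_inj.
  (* the star of y, which is at least as large, lies in the image of the star of x *)
  apply: (leq_size_uniq (s1 := star_edges nH lH y)); first exact: uniq_star_edges.
    move=> e; rewrite mem_star_edges // -fx_y => /imsetP[e' xe' ->].
    by apply: map_f; rewrite mem_star_edges.
  rewrite size_map !size_star_edges //.
  apply: (leq_trans (allP degG x _)); first by rewrite mem_iota ltn_ord.
  by apply: (allP degH y); rewrite mem_iota ltn_ord.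
apply/concurrentP; exists y; apply/allP => _ /mapP[e Se ->] /=.
by have := f_star e Se; rewrite inE -pair_ofK inE.
Qed.

Lemma induced_star_preserving : star_preserving lG lH (map induced_pair lG).
Proof.
split; first exact: size_map.
  by move=> _ /mapP[p pl ->]; exact: induced_pair_in.
move=> x; rewrite star_image_map.
have [lt_x | ge_x] := ltnP x nG; first exact: (induced_star (Ordinal lt_x)).
rewrite (eq_in_filter (a2 := pred0)) ?filter_pred0 // => p /(allP lG_bounded)/andP[p1 p2].
by rewrite /touches !gtn_eqF ?(leq_trans p1) ?(leq_trans p2).
Qed.

End InducedAssignment.

Lemma petersen_bounded : all (fun p => (p.1 < 10) && (p.2 < 10)) petersen_edges.
Proof. by []. Qed.

Lemma S16_bounded : all (fun q => (q.1 < 16) && (q.2 < 16)) S16_edges.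
Proof. by []. Qed.

Lemma S16_simple : uniq [seq incidence 16 q | q <- S16_edges].
Proof. by vm_compute. Qed.

Lemma petersen_cubic : all (fun x => count (touches x) petersen_edges <= 3) (iota 0 10).
Proof. by []. Qed.

Lemma S16_cubic : all (fun y => 3 <= count (touches y) S16_edges) (iota 0 16).
Proof. by []. Qed.

Lemma no_star_preserving_assignment :
  refuted (star_cands petersen_edges S16_edges) (size petersen_edges) [::].
Proof. by vm_compute. Qed.

Theorem corollary1 : ~ admits_coloring _ _ petersen S16.
Proof.
case=> f f_coloring.
have := induced_star_preserving petersen_bounded S16_bounded S16_simple
          petersen_cubic S16_cubic f_coloring.
exact: (refutedP (@star_cands_complete _ _) no_star_preserving_assignment (size_map _ _)).
Qed.
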